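(* Let $\mathcal{G}=\widehat{L}(G,\sigma)$ be an affine Kac–Moody group with a geometric twin $BN$-pair $(B^+,B^-,N,W,S)$ with associated subgroups $\mathcal{G}^+,\mathcal{G}^-$, and let $\mathfrak{B}=\mathfrak{B}^+\cup\mathfrak{B}^-$ be its twin city, with chamber sets $\mathcal{C}^{\pm}=\mathcal{G}/B^{\pm}$. Then: (1) the relation on $\mathcal{C}^{\epsilon}$ ($\epsilon\in\{+,-\}$) ''$\delta^{\epsilon}(c_1,c_2)\in W$'' is an equivalence relation, and each equivalence class (connected component of $\mathfrak{B}^{\epsilon}$) together with the restriction of $\delta^{\epsilon}$ is an (affine) building of type $(W,S)$; (2) for each connected component $\Delta^+$ of $\mathfrak{B}^+$ and each connected component $\Delta^-$ of $\mathfrak{B}^-$, the quintuple $(\Delta^+,\Delta^-,\delta^+,\delta^-,\delta^* )$ (restrictions) is a twin building of type $(W,S)$; (3) the connected components of $\mathfrak{B}^{\epsilon}$ are indexed by the elements of $\mathcal{G}/\mathcal{G}^{\epsilon}$; more precisely the component containing $fB^{\epsilon}$ is $\{fhB^{\epsilon}: h\in \mathcal{G}^{\epsilon}\}$.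
   Context: $W$ is the affine Weyl group, $S$ its set of simple reflections. A geometric twin $BN$-pair for $\mathcal{G}$: subgroups $\mathcal{G}^{\pm}$ generating $\mathcal{G}$ such that $(B^+,N,W,S)$ is a $BN$-pair for $\mathcal{G}^+$, $(B^-,N,W,S)$ is a $BN$-pair for $\mathcal{G}^-$, and $(B^+\cap\mathcal{G}^-,B^-\cap\mathcal{G}^+,N,W,S)$ is a twin $BN$-pair for $\mathcal{G}^+\cap\mathcal{G}^-$; moreover $\mathcal{G}$ has the Bruhat twin decomposition $\mathcal{G}=\coprod_{w\in W}B^{\epsilon}wB^{-\epsilon}$ for $\epsilon\in\{+,-\}$ (so $\mathcal{G}^{\epsilon}=\coprod_{w}B^{\epsilon}wB^{\epsilon}$). Twin city: chambers $\mathcal{C}^{\epsilon}=\mathcal{G}/B^{\epsilon}$; Weyl distance $\delta^{\epsilon}(gB^{\epsilon},fB^{\epsilon})=w$ where $g^{-1}f\in B^{\epsilon}wB^{\epsilon}$ if $g^{-1}f\in\mathcal{G}^{\epsilon}$, and $\delta^{\epsilon}=\infty$ otherwise; codistance $\delta^*(gB^{+},fB^{-})=w$ where $g^{-1}f\in B^+wB^-$, and $\delta^*(gB^{-},fB^{+})=w$ where $g^{-1}f\in B^-wB^+$. A building of type $(W,S)$ (W-metric definition): a set $\mathcal{C}$ with $\delta:\mathcal{C}\times\mathcal{C}\to W$ such that (i) $\delta(C,D)=1$ iff $C=D$; (ii) if $\delta(C,D)=w$ and $\delta(C',C)=s\in S$ then $\delta(C',D)\in\{sw,w\}$, and $=sw$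 if $l(sw)=l(w)+1$; (iii) if $\delta(C,D)=w$ then for any $s\in S$ there is $C'$ with $\delta(C',C)=s$, $\delta(C',D)=sw$. A twin building $(\mathcal{C}^+,\mathcal{C}^-,\delta^+,\delta^-,\delta^* )$: both $(\mathcal{C}^{\pm},\delta^{\pm})$ are buildings of type $(W,S)$ and for $X\in\mathcal{C}^{\epsilon}$, $Y,Z\in\mathcal{C}^{-\epsilon}$: (a) $\delta^*(X,Y)=\delta^*(Y,X)^{-1}$; (b) if $\delta^*(X,Y)=w$, $\delta(Y,Z)=s\in S$, $l(ws)=l(w)-1$, then $\delta^*(X,Z)=ws$; (c) if $\delta^*(X,Y)=w$ and $s\in S$ there is $Z$ with $\delta(Y,Z)=s$ and $\delta^*(X,Z)=ws$. *)

From Stdlib Require Import List Arith ClassicalEpsilon.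

Record Group := {
  gcar :> Type;
  gmul : gcar -> gcar -> gcar;
  ginv : gcar -> gcar;
  gone : gcar;
  gmulA : forall x y z, gmul x (gmul y z) = gmul (gmul x y) z;
  gmul1 : forall x, gmul gone x = x;
  gmulV : forall x, gmul (ginv x) x = gone }.

Arguments gmul {_} _ _.
Arguments ginv {_} _.
Arguments gone {_}.

Declare Scope grp_scope.
Delimit Scope grp_scope with grp.
Notation "x * y" := (gmul x y) : grp_scope.
Notation "x ^-1" := (ginv x) (at level 3, left associativity) : grp_scope.
Notation "1" := gone : grp_scope.
Open Scope grp_scope.

Section GroupSets.
Context {G : Group}.

Definition subgroup (H : G -> Prop) : Prop :=
  H 1 /\ (forall x y, H x -> H y -> H (x * y)) /\ (forall x, H x -> H (x^-1)).

Definition gen (A : G -> Prop) : G -> Prop :=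
  fun g => forall K, subgroup K -> (forall a, A a -> K a) -> K g.

Definition setI (A B : G -> Prop) : G -> Prop := fun g => A g /\ B g.
Definition setU (A B : G -> Prop) : G -> Prop := fun g => A g \/ B g.

Definition lcoset (g : G) (A : G -> Prop) : G -> Prop :=
  fun x => exists a, A a /\ x = g * a.

End GroupSets.

Section Length.
Context {W : Group} (S : W -> Prop).

Definition wprod (l : list W) : W := fold_right (fun s w => s * w) 1 l.

Definition is_len (w : W) (k : nat) : Prop :=
  (exists l, Forall S l /\ length l = k /\ wprod l = w) /\
  (forall l, Forall S l -> wprod l = w -> k <= length l).

(* len_succ w' w : l(w) = l(w') + 1 *)
Definition len_succ (w' w : W) : Prop :=
  (exists k, is_len w' k) /\ forall k, is_len w' k -> is_len w (Nat.succ k).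

End Length.

Section BN.
Context {G W : Group} (S : W -> Prop) (pi : G -> W) (N : G -> Prop).

(* The Weyl group W = N/(B cap N) is encoded by the map pi, which restricted to N
   is a surjective homomorphism onto W (kernel described in BNpair). *)
Definition dcoset (A : G -> Prop) (w : W) (C : G -> Prop) : G -> Prop :=
  fun g => exists n a c, N n /\ pi n = w /\ A a /\ C c /\ g = a * n * c.

Definition dcoset3 (A : G -> Prop) (s : W) (A' : G -> Prop) (w : W) (C : G -> Prop)
  : G -> Prop :=
  fun g => exists n m a a' c, N n /\ pi n = s /\ N m /\ pi m = w /\
     A a /\ A' a' /\ C c /\ g = a * n * a' * m * c.

Definition BNpair (H B : G -> Prop) : Prop :=
  subgroup H /\ subgroup B /\ subgroup N /\
  (forall g, B g -> H g) /\ (forall g, N g -> H g) /\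
  (forall g, H g <-> gen (setU B N) g) /\
  (forall n m, N n -> N m -> pi (n * m) = pi n * pi m) /\
  (forall w, exists n, N n /\ pi n = w) /\
  (forall n, N n -> (pi n = 1 <-> B n)) /\
  (forall s, S s -> s * s = 1 /\ s <> 1) /\
  (forall w, gen S w) /\
  (forall s w n m b, S s -> N n -> pi n = s -> N m -> pi m = w -> B b ->
      dcoset B (s * w) B (n * b * m) \/ dcoset B w B (n * b * m)) /\
  (forall s n, S s -> N n -> pi n = s ->
      ~ (forall g, (exists b, B b /\ g = n * b * n) <-> B g)).

Definition twinBNpair (H Bp Bm : G -> Prop) : Prop :=
  BNpair H Bp /\ BNpair H Bm /\
  (forall n, N n -> (Bp n <-> Bm n)) /\
  (forall s w, S s -> len_succ S (s * w) w ->
     forall g, dcoset3 Bp s Bp w Bm g <-> dcoset Bp (s * w) Bm g) /\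
  (forall s w, S s -> len_succ S (s * w) w ->
     forall g, dcoset3 Bm s Bm w Bp g <-> dcoset Bm (s * w) Bp g) /\
  (forall s n, S s -> N n -> pi n = s ->
     ~ exists g, (exists b, Bp b /\ g = b * n) /\ Bm g).

Definition geometric_twinBN (Gp Gm Bp Bm : G -> Prop) : Prop :=
  subgroup Gp /\ subgroup Gm /\
  (forall g, gen (setU Gp Gm) g) /\
  BNpair Gp Bp /\ BNpair Gm Bm /\
  twinBNpair (setI Gp Gm) (setI Bp Gm) (setI Bm Gp) /\
  (forall g, exists w, dcoset Bp w Bm g /\ forall w', dcoset Bp w' Bm g -> w' = w) /\
  (forall g, exists w, dcoset Bm w Bp g /\ forall w', dcoset Bm w' Bp g -> w' = w).

End BN.

Section Buildings.
Context {W : Group} (S : W -> Prop).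

Definition building (C : Type) (delta : C -> C -> W) : Prop :=
  (forall X Y, delta X Y = 1 <-> X = Y) /\
  (forall X Y X' w s, delta X Y = w -> delta X' X = s -> S s ->
      (delta X' Y = s * w \/ delta X' Y = w) /\
      (len_succ S w (s * w) -> delta X' Y = s * w)) /\
  (forall X Y s, S s -> exists X', delta X' X = s /\ delta X' Y = s * delta X Y).

Definition twin_building (Cp Cm : Type) (dp : Cp -> Cp -> W) (dm : Cm -> Cm -> W)
  (dpm : Cp -> Cm -> W) (dmp : Cm -> Cp -> W) : Prop :=
  building Cp dp /\ building Cm dm /\
  (forall X Y, dpm X Y = (dmp Y X)^-1) /\
  (forall X Y, dmp X Y = (dpm Y X)^-1) /\
  (forall X Y Z w s, dpm X Y = w -> dm Y Z = s -> S s -> len_succ S (w * s) w ->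
      dpm X Z = w * s) /\
  (forall X Y Z w s, dmp X Y = w -> dp Y Z = s -> S s -> len_succ S (w * s) w ->
      dmp X Z = w * s) /\
  (forall X Y s, S s -> exists Z, dm Y Z = s /\ dpm X Z = dpm X Y * s) /\
  (forall X Y s, S s -> exists Z, dp Y Z = s /\ dmp X Z = dmp X Y * s).

End Buildings.

Section TwinCity.
Context {G W : Group} (pi : G -> W) (N : G -> Prop).

Definition chamber (B : G -> Prop) : Type := { X : G -> Prop | exists g, X = lcoset g B }.

Definition dist_rel (Ge B : G -> Prop) (X Y : chamber B) (w : W) : Prop :=
  exists g f, proj1_sig X = lcoset g B /\ proj1_sig Y = lcoset f B /\
    Ge (g^-1 * f) /\ dcoset pi N B w B (g^-1 * f).

(* delta^e : C^e x C^e -> W u {infinity};  None stands for infinity *)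
Definition dist (Ge B : G -> Prop) (X Y : chamber B) : option W :=
  epsilon (inhabits None) (fun o => match o with
    | Some w => dist_rel Ge B X Y w
    | None => ~ exists w, dist_rel Ge B X Y w end).

Definition codist_rel (B B' : G -> Prop) (X : chamber B) (Y : chamber B') (w : W) : Prop :=
  exists g f, proj1_sig X = lcoset g B /\ proj1_sig Y = lcoset f B' /\
    dcoset pi N B w B' (g^-1 * f).

Definition codist (B B' : G -> Prop) (X : chamber B) (Y : chamber B') : W :=
  epsilon (inhabits 1) (codist_rel B B' X Y).

Definition connected (Ge B : G -> Prop) (X Y : chamber B) : Prop :=
  dist Ge B X Y <> None.

Definition component (Ge B : G -> Prop) (X0 : chamber B) : Type :=
  { X : chamber B | connected Ge B X0 X }.

(* restriction of delta^e to a component (values are in W there) *)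
Definition dist_comp (Ge B : G -> Prop) (X0 : chamber B)
  (X Y : component Ge B X0) : W :=
  match dist Ge B (proj1_sig X) (proj1_sig Y) with Some w => w | None => 1 end.

Definition codist_comp (Gp Bp Gm Bm : G -> Prop) (X0 : chamber Bp) (Y0 : chamber Bm)
  (X : component Gp Bp X0) (Y : component Gm Bm Y0) : W :=
  codist Bp Bm (proj1_sig X) (proj1_sig Y).

Definition cham (B : G -> Prop) (f : G) : chamber B :=
  exist _ (lcoset f B) (ex_intro _ f eq_refl).

Definition equivalence {T : Type} (R : T -> T -> Prop) : Prop :=
  (forall x, R x x) /\ (forall x y, R x y -> R y x) /\
  (forall x y z, R x y -> R y z -> R x z).

Definition part1 (S : W -> Prop) (Ge B : G -> Prop) : Prop :=
  equivalence (connected Ge B) /\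
  forall X0 : chamber B, building S (component Ge B X0) (dist_comp Ge B X0).

Definition part3 (Ge B : G -> Prop) : Prop :=
  (forall (f : G) (X : chamber B),
     connected Ge B (cham B f) X <-> exists h, Ge h /\ proj1_sig X = lcoset (f * h) B) /\
  (forall f f' : G, connected Ge B (cham B f) (cham B f') <-> Ge (f^-1 * f')).

End TwinCity.

(* Everything is read off double cosets.  In a BN-pair (B, N) of a group H the
   Bruhat decomposition H = ⊔ BwB, together with BsB·BwB ⊆ BswB ∪ BwB, which
   shrinks to BswB when l(sw) = l(w) + 1, gives the building axioms for
   δ(gB, fB) = w ⟺ g⁻¹f ∈ BwB.  As δ^ε(gB, fB) is defined iff g⁻¹f ∈ G^ε, two
   chambers are connected iff their representatives agree modulo G^ε.  Of the
   twin axioms only (b) needs work: with o = -ε it says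
   B^o w B^ε · B^ε s B^ε ⊆ B^o ws B^ε when l(ws) < l(w).  Writing n b m in some
   B^o v B^ε by the twin Bruhat decomposition, the factors can be moved into
   G^+ ∩ G^-, where (TBN1) of the twin BN-pair forces v = ws. *)

From Stdlib Require Import List Arith Lia ClassicalEpsilon
  FunctionalExtensionality PropExtensionality.
Open Scope grp_scope.

Section GroupFacts.
Context {G : Group}.
Implicit Types x y z : G.

Lemma mulgV x : x * x^-1 = 1.
Proof.
  assert (idem : (x * x^-1) * (x * x^-1) = x * x^-1).
  { rewrite <- gmulA, (gmulA G x^-1 x x^-1), gmulV, gmul1. reflexivity. }
  transitivity ((x * x^-1)^-1 * ((x * x^-1) * (x * x^-1))).
  - rewrite gmulA, gmulV, gmul1. reflexivity.
  - rewrite idem. apply gmulV.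
Qed.

Lemma mulg1 x : x * 1 = x.
Proof. rewrite <- (gmulV G x), gmulA, mulgV, gmul1. reflexivity. Qed.

Lemma mulKg x y : x^-1 * (x * y) = y.
Proof. rewrite gmulA, gmulV, gmul1. reflexivity. Qed.
Lemma mulKVg x y : x * (x^-1 * y) = y.
Proof. rewrite gmulA, mulgV, gmul1. reflexivity. Qed.
Lemma mulgK x y : y * x * x^-1 = y.
Proof. rewrite <- gmulA, mulgV, mulg1. reflexivity. Qed.
Lemma mulgKV x y : y * x^-1 * x = y.
Proof. rewrite <- gmulA, gmulV, mulg1. reflexivity. Qed.

Lemma mulgI x y z : x * y = x * z -> y = z.
Proof. intro e. rewrite <- (mulKg x y), e, mulKg. reflexivity. Qed.
Lemma mulIg x y z : y * x = z * x -> y = z.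
Proof. intro e. rewrite <- (mulgK x y), e, mulgK. reflexivity. Qed.

Lemma invg_unique x y : x * y = 1 -> x^-1 = y.
Proof. intro e. rewrite <- (mulg1 x^-1), <- e, mulKg. reflexivity. Qed.
Lemma invgK x : (x^-1)^-1 = x.
Proof. apply invg_unique, gmulV. Qed.
Lemma invMg x y : (x * y)^-1 = y^-1 * x^-1.
Proof. apply invg_unique. rewrite gmulA, mulgK, mulgV. reflexivity. Qed.
Lemma invg1 : (1 : G)^-1 = 1.
Proof. apply invg_unique, mulg1. Qed.

Section Subgroup.
Variables (K : G -> Prop) (sK : subgroup K).

Lemma group1 : K 1. Proof. apply sK. Qed.
Lemma groupM x y : K x -> K y -> K (x * y). Proof. apply sK. Qed.
Lemma groupV x : K x -> K (x^-1). Proof. apply sK. Qed.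

End Subgroup.
End GroupFacts.

#[local] Hint Extern 2 => match goal with |- ?K 1 => apply (group1 K) end : core.
#[local] Hint Extern 2 => match goal with |- ?K (_ * _) => apply (groupM K) end : core.
#[local] Hint Extern 2 => match goal with |- ?K (_^-1) => apply (groupV K) end : core.

Ltac gsimpl := repeat progress rewrite ?invMg, ?invgK, ?invg1, ?gmulA, ?gmulV,
  ?mulgV, ?gmul1, ?mulg1, ?mulgKV, ?mulgK.

Lemma sig_eq {A : Type} {P : A -> Prop} (X Y : {x : A | P x}) :
  proj1_sig X = proj1_sig Y -> X = Y.
Proof. apply eq_sig_hprop. intros; apply proof_irrelevance. Qed.

Section Length.
Context {W : Group}.

Lemma wprod_app (l1 l2 : list W) : wprod (l1 ++ l2) = wprod l1 * wprod l2.
Proof. induction l1 as [|s l1 IH]; simpl; rewrite ?gmul1, ?IH, ?gmulA; reflexivity. Qed.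

Variables (SS : W -> Prop) (Sinv : forall s, SS s -> s * s = 1 /\ s <> 1)
  (Sgen : forall w, gen SS w).

Lemma invS s : SS s -> s^-1 = s.
Proof. intro hs. apply invg_unique, Sinv, hs. Qed.

Lemma wprod_rev l : Forall SS l -> wprod (rev l) = (wprod l)^-1.
Proof.
  induction 1 as [|s l hs _ IH]; simpl; [rewrite invg1; reflexivity|].
  rewrite wprod_app, IH. simpl. rewrite mulg1, invMg, (invS s hs). reflexivity.
Qed.

Lemma words w : exists l, Forall SS l /\ wprod l = w.
Proof.
  apply (Sgen w).
  - split; [|split].
    + exists nil; auto.
    + intros x y [l1 [h1 <-]] [l2 [h2 <-]]. exists (l1 ++ l2).
      split; [apply Forall_app; auto | apply wprod_app].
    + intros x [l [h <-]]. exists (rev l). split; [apply Forall_rev, h | apply wprod_rev, h].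
  - intros s hs. exists (s :: nil). split; auto. apply mulg1.
Qed.

Definition len (w : W) : nat := epsilon (inhabits 0) (is_len SS w).

Lemma len_spec w : is_len SS w (len w).
Proof.
  unfold len. apply epsilon_spec.
  set (P k := exists l, Forall SS l /\ length l = k /\ wprod l = w).
  destruct (dec_inh_nat_subset_has_unique_least_element P (fun k => classic (P k)))
    as [k [[Pk kmin] _]].
  - destruct (words w) as [l [hl e]]. exists (length l), l. auto.
  - exists k. split; [exact Pk|]. intros l hl e. apply kmin. exists l. auto.
Qed.

Lemma len_min w l : Forall SS l -> wprod l = w -> len w <= length l.
Proof. apply len_spec. Qed.

Lemma len_word w : exists l, Forall SS l /\ length l = len w /\ wprod l = w.
Proof. apply len_spec. Qed.

Lemma is_len_len w k : is_len SS w k -> k = len w.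
Proof.
  intros [[l [hl [<- e]]] kmin]. destruct (len_word w) as [l' [hl' [e' e'']]].
  pose proof (len_min w l hl e). pose proof (kmin l' hl' e''). lia.
Qed.

Lemma len_succP v w : len_succ SS v w <-> len w = S (len v).
Proof.
  split.
  - intros [_ h]. symmetry. apply is_len_len, h, len_spec.
  - intro e. split; [exists (len v); apply len_spec|].
    intros k hk. rewrite (is_len_len v k hk). change (is_len SS w (S (len v))).
    rewrite <- e. apply len_spec.
Qed.

Lemma len_inv w : len (w^-1) = len w.
Proof.
  assert (le : forall v, len (v^-1) <= len v).
  { intro v. destruct (len_word v) as [l [hl [<- <-]]]. rewrite <- length_rev.
    apply len_min; [apply Forall_rev, hl | apply wprod_rev, hl]. }
  pose proof (le w). pose proof (le (w^-1)). rewrite invgK in *. lia.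
Qed.

Lemma len_mul_genl w s : SS s -> len (s * w) <= S (len w).
Proof.
  intro hs. destruct (len_word w) as [l [hl [<- <-]]].
  apply (len_min _ (s :: l)); auto.
Qed.

Lemma len_mul_genr w s : SS s -> len (w * s) <= S (len w).
Proof.
  intro hs. destruct (len_word w) as [l [hl [<- <-]]].
  replace (S (length l)) with (length (l ++ s :: nil)) by (rewrite length_app; simpl; lia).
  apply len_min; [apply Forall_app; auto | rewrite wprod_app; simpl; rewrite mulg1; reflexivity].
Qed.

Lemma len_eq0 w : len w = 0 -> w = 1.
Proof.
  intro e. destruct (len_word w) as [[|s l] [_ [e' <-]]]; [reflexivity|].
  simpl in *. lia.
Qed.

Lemma len_splitl w k : len w = S k -> exists s v, SS s /\ w = s * v /\ len v = k.
Proof.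
  intro e. destruct (len_word w) as [[|s l] [hl [e' <-]]]; simpl in *; [lia|].
  inversion hl as [|? ? hs hl']; subst.
  exists s, (wprod l). split; [exact hs|]. split; [reflexivity|].
  pose proof (len_min (wprod l) l hl' eq_refl). pose proof (len_mul_genl (wprod l) s hs). lia.
Qed.

Lemma len_splitr w k : len w = S k -> exists v s, SS s /\ w = v * s /\ len v = k.
Proof.
  intro e. destruct (len_splitl (w^-1) k) as [s [v [hs [ew ev]]]]; [rewrite len_inv; exact e|].
  exists (v^-1), s. split; [exact hs|]. split.
  - rewrite <- (invgK w), ew, invMg, (invS s hs). reflexivity.
  - rewrite len_inv. exact ev.
Qed.

End Length.

Lemma lcoset_eq {G : Group} (B : G -> Prop) (g f : G) :
  subgroup B -> lcoset g B = lcoset f B <-> B (g^-1 * f).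
Proof.
  intro sB. split.
  - intro e. assert (hf : lcoset f B f) by (exists 1; split; [auto | rewrite mulg1; reflexivity]).
    rewrite <- e in hf. destruct hf as [b [hb ->]]. rewrite mulKg. exact hb.
  - intro hb. apply functional_extensionality. intro x. apply propositional_extensionality.
    split; intros [a [ha ->]].
    + exists (f^-1 * g * a). split; [|gsimpl; reflexivity].
      replace (f^-1 * g) with ((g^-1 * f)^-1) by (gsimpl; reflexivity). auto.
    + exists (g^-1 * f * a). split; [auto | gsimpl; reflexivity].
Qed.

Section DoubleCosets.
Context {G W : Group} {pi : G -> W} {N : G -> Prop}.
Implicit Types A C : G -> Prop.

Lemma dcoset_mull A C w x g : subgroup A -> A x ->
  dcoset pi N A w C g -> dcoset pi N A w C (x * g).
Proof.
  intros sA hx (n & a & c & hn & e & ha & hc & ->). exists n, (x * a), c.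
  repeat split; auto. gsimpl. reflexivity.
Qed.

Lemma dcoset_mulr A C w x g : subgroup C -> C x ->
  dcoset pi N A w C g -> dcoset pi N A w C (g * x).
Proof.
  intros sC hx (n & a & c & hn & e & ha & hc & ->). exists n, a, (c * x).
  repeat split; auto. gsimpl. reflexivity.
Qed.

Lemma dcoset_sub A C A' C' w g : (forall x, A' x -> A x) -> (forall x, C' x -> C x) ->
  dcoset pi N A' w C' g -> dcoset pi N A w C g.
Proof. intros hA hC (n & a & c & hn & e & ha & hc & ->). exists n, a, c. auto 10. Qed.

End DoubleCosets.

Section BNpairTheory.
Context {G W : Group} {SS : W -> Prop} {pi : G -> W} {N H B : G -> Prop}
  (hBN : BNpair SS pi N H B).

Local Notation BwB w := (dcoset pi N B w B).

Local Ltac BN_axiom := destruct hBN as (?&?&?&?&?&?&?&?&?&?&?&?&?); eauto.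

Lemma BN_groupH : subgroup H. Proof. BN_axiom. Qed.
Lemma BN_groupB : subgroup B. Proof. BN_axiom. Qed.
Lemma BN_groupN : subgroup N. Proof. BN_axiom. Qed.
Lemma BN_subB g : B g -> H g. Proof. BN_axiom. Qed.
Lemma BN_subN g : N g -> H g. Proof. BN_axiom. Qed.
Lemma BN_gen g : H g -> gen (setU B N) g. Proof. destruct hBN as (?&?&?&?&?&gen&?); apply gen. Qed.
Lemma BN_morph n m : N n -> N m -> pi (n * m) = pi n * pi m. Proof. BN_axiom. Qed.
Lemma BN_surj w : exists n, N n /\ pi n = w. Proof. BN_axiom. Qed.
Lemma BN_ker n : N n -> pi n = 1 <-> B n. Proof. BN_axiom. Qed.
Lemma BN_Sinv s : SS s -> s * s = 1 /\ s <> 1. Proof. BN_axiom. Qed.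
Lemma BN_Sgen w : gen SS w. Proof. BN_axiom. Qed.
Lemma BN_exchange s w n m b : SS s -> N n -> pi n = s -> N m -> pi m = w -> B b ->
  BwB (s * w) (n * b * m) \/ BwB w (n * b * m).
Proof. BN_axiom. Qed.

Let sB := BN_groupB.
Let sN := BN_groupN.


Lemma pi1 : pi 1 = 1.
Proof.
  apply (mulgI (pi 1)). rewrite mulg1, <- BN_morph, gmul1; auto.
Qed.

Lemma piV n : N n -> pi (n^-1) = (pi n)^-1.
Proof.
  intro hn. apply (mulIg (pi n)). rewrite <- BN_morph, !gmulV; auto using pi1.
Qed.

Lemma dcoset_inv A C w g : subgroup A -> subgroup C ->
  dcoset pi N A w C g -> dcoset pi N C (w^-1) A (g^-1).
Proof.
  intros sA sC (n & a & c & hn & <- & ha & hc & ->).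
  exists (n^-1), (c^-1), (a^-1). repeat split; auto using piV. gsimpl. reflexivity.
Qed.

Lemma BwB_N n : N n -> BwB (pi n) n.
Proof. intro hn. exists n, 1, 1. repeat split; auto. gsimpl. reflexivity. Qed.

Lemma BwB1 g : BwB 1 g <-> B g.
Proof.
  split.
  - intros (n & a & c & hn & e & ha & hc & ->). apply BN_ker in e; auto.
  - intro hg. exists 1, 1, g. repeat split; auto using pi1. gsimpl. reflexivity.
Qed.

Lemma BsB_inv s x : SS s -> BwB s x -> BwB s (x^-1).
Proof.
  intros hs hx. apply dcoset_inv in hx; auto. rewrite (invS SS BN_Sinv s hs) in hx. exact hx.
Qed.

Lemma BsB_mul s w x y : SS s -> BwB s x -> BwB w y ->
  BwB (s * w) (x * y) \/ BwB w (x * y).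
Proof.
  intros hs (n & a & c & hn & e & ha & hc & ->) (m & a' & c' & hm & e' & ha' & hc' & ->).
  replace (a * n * c * (a' * m * c')) with (a * (n * (c * a') * m) * c') by (gsimpl; reflexivity).
  destruct (BN_exchange s w n m (c * a')) as [h|h]; auto;
    [left|right]; apply dcoset_mulr, dcoset_mull; auto.
Qed.

Lemma mul_BsB w s x y : SS s -> BwB w x -> BwB s y ->
  BwB (w * s) (x * y) \/ BwB w (x * y).
Proof.
  intros hs hx hy. apply dcoset_inv in hx; auto.
  destruct (BsB_mul s (w^-1) (y^-1) (x^-1) hs (BsB_inv s y hs hy) hx) as [h|h];
    apply dcoset_inv in h; auto; rewrite <- invMg, !invgK in h; [left|right]; auto.
  rewrite invMg, invgK, (invS SS BN_Sinv s hs) in h. exact h.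
Qed.

Definition bruhat_stable (g : G) : Prop :=
  forall y, (exists w, BwB w y) -> exists w, BwB w (g * y).

Lemma bruhat_stable_B b : B b -> bruhat_stable b.
Proof. intros hb y [w hw]. exists w. apply dcoset_mull; auto. Qed.

Lemma bruhat_stableM g h : bruhat_stable g -> bruhat_stable h -> bruhat_stable (g * h).
Proof. intros hg hh y hy. rewrite <- gmulA. apply hg, hh, hy. Qed.

Lemma bruhat_stable_N n : N n -> bruhat_stable n.
Proof.
  intro hn. destruct (words SS BN_Sinv BN_Sgen (pi n)) as [l [hl e]].
  revert n hn e. induction hl as [|s l hs _ IH]; intros n hn e.
  - apply bruhat_stable_B, BN_ker; auto.
  - destruct (BN_surj s) as [m [hm <-]].
    rewrite <- (mulKVg m n). apply bruhat_stableM.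
    + intros y [w hw]. destruct (BsB_mul (pi m) w m y hs (BwB_N m hm) hw); eauto.
    + apply IH; auto. rewrite BN_morph, piV, <- e; auto. simpl. gsimpl. reflexivity.
Qed.

Theorem bruhat_cover g : H g -> exists w, BwB w g.
Proof.
  intro hg. assert (stable : bruhat_stable g /\ bruhat_stable (g^-1)).
  { apply (BN_gen g hg).
    - split; [|split].
      + rewrite invg1. split; apply bruhat_stable_B; auto.
      + intros x y [] []. rewrite invMg. split; apply bruhat_stableM; assumption.
      + intros x []. rewrite invgK. split; assumption.
    - intros a [h|h]; split; auto using bruhat_stable_B, bruhat_stable_N. }
  rewrite <- (mulg1 g). apply stable. exists 1. apply BwB1. auto.
Qed.

Lemma bruhat_disjoint_len k w w' g : len SS w = k -> len SS w <= len SS w' ->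
  BwB w g -> BwB w' g -> w = w'.
Proof.
  revert w w' g. induction k as [k IH] using lt_wf_ind. intros w w' g ek hle hw hw'.
  destruct k as [|k].
  - apply (len_eq0 SS BN_Sinv BN_Sgen) in ek. subst w. apply BwB1 in hw.
    destruct hw' as (n & a & c & hn & <- & ha & hc & ->).
    symmetry. apply BN_ker; auto.
    replace n with (a^-1 * (a * n * c) * c^-1) by (gsimpl; reflexivity). auto.
  - destruct (len_splitl SS BN_Sinv BN_Sgen w k ek) as [s [v [hs [-> ev]]]].
    destruct hw as (n & a & c & hn & e & ha & hc & ->).
    destruct (BN_surj s) as [m [hm <-]].
    assert (hss : pi m * pi m = 1) by apply (BN_Sinv _ hs).
    assert (hv : BwB v (m^-1 * n * c)).
    { exists (m^-1 * n), 1, c. repeat split; auto.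
      - rewrite BN_morph, piV, e, (invS SS BN_Sinv _ hs), gmulA, hss, gmul1; auto.
      - gsimpl. reflexivity. }
    assert (hm' : BwB (pi m) (m^-1)) by (apply BsB_inv, BwB_N; auto).
    assert (hw'' : BwB w' (a^-1 * (a * n * c))) by (apply dcoset_mull; auto).
    replace (a^-1 * (a * n * c)) with (n * c) in hw'' by (gsimpl; reflexivity).
    destruct (BsB_mul _ _ _ _ hs hm' hw'') as [h|h]; rewrite gmulA in h.
    + assert (v = pi m * w').
      { apply (IH k (Nat.lt_succ_diag_r k) v _ (m^-1 * n * c)); auto.
        pose proof (len_mul_genl SS BN_Sinv BN_Sgen (pi m * w') (pi m) hs).
        rewrite gmulA, hss, gmul1 in H0. lia. }
      subst v. rewrite gmulA, hss, gmul1. reflexivity.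
    + assert (v = w') by (apply (IH k (Nat.lt_succ_diag_r k) v w' (m^-1 * n * c)); auto; lia).
      subst v. lia.
Qed.

Theorem bruhat_disjoint w w' g : BwB w g -> BwB w' g -> w = w'.
Proof.
  intros h h'. destruct (le_ge_dec (len SS w) (len SS w')).
  - eapply bruhat_disjoint_len; eauto.
  - symmetry. eapply bruhat_disjoint_len; eauto.
Qed.

Lemma BsB_cancel s u w x y : SS s -> BwB s x -> BwB u (x * y) -> BwB w y ->
  w = s * u \/ w = u.
Proof.
  intros hs hx hxy hy. rewrite <- (mulKg x y) in hy.
  destruct (BsB_mul s u _ _ hs (BsB_inv s x hs hx) hxy) as [h|h];
    [left|right]; exact (bruhat_disjoint _ _ _ hy h).
Qed.

Lemma BsB_mul_reduced_len k s w x y : SS s -> len SS w = k -> len SS (s * w) = S k ->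
  BwB s x -> BwB w y -> BwB (s * w) (x * y).
Proof.
  revert s w x y. induction k as [k IH] using lt_wf_ind. intros s w x y hs ek esw hx hy.
  destruct k as [|k].
  - apply (len_eq0 SS BN_Sinv BN_Sgen) in ek. subst w. apply BwB1 in hy.
    rewrite mulg1. apply dcoset_mulr; auto.
  - destruct (len_splitr SS BN_Sinv BN_Sgen w k ek) as [v [t [ht [-> ev]]]].
    assert (hss : s * s = 1) by apply (BN_Sinv _ hs).
    assert (esv : len SS (s * v) = S k).
    { pose proof (len_mul_genl SS BN_Sinv BN_Sgen v s hs).
      pose proof (len_mul_genr SS BN_Sinv BN_Sgen (s * v) t ht). rewrite gmulA in esw. lia. }
    pose proof hy as (n & a & c & hn & e & ha & hc & ey).
    destruct (BN_surj t) as [m [hm <-]].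
    (* split y = (a n m^-1) (m c) along w = v t *)
    assert (hv : BwB v (a * (n * m^-1))).
    { exists (n * m^-1), a, 1. repeat split; auto.
      - rewrite BN_morph, piV, e, mulgK; auto.
      - gsimpl. reflexivity. }
    assert (hxv := IH k (Nat.lt_succ_diag_r k) s v x _ hs ev esv hx hv).
    destruct (mul_BsB _ _ _ (m * c) ht hxv) as [h|h].
    { exists m, 1, c. repeat split; auto. gsimpl. reflexivity. }
    all: replace (x * (a * (n * m^-1)) * (m * c)) with (x * y) in h
      by (rewrite ey; gsimpl; reflexivity).
    + rewrite gmulA. exact h.
    + exfalso. destruct (BsB_cancel s _ _ x y hs hx h hy) as [ew|ew].
      * rewrite gmulA, hss, gmul1 in ew.
        apply (proj2 (BN_Sinv _ ht)), (mulgI v). rewrite mulg1. exact ew.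
      * rewrite ew, gmulA, hss, gmul1 in esw. lia.
Qed.

Theorem BsB_mul_reduced s w x y : SS s -> len SS (s * w) = S (len SS w) ->
  BwB s x -> BwB w y -> BwB (s * w) (x * y).
Proof. intros. eapply BsB_mul_reduced_len; eauto. Qed.

End BNpairTheory.

Section Chambers.
Context {G W : Group} {SS : W -> Prop} {pi : G -> W} {N Ge B : G -> Prop}
  (hBN : BNpair SS pi N Ge B).

Local Notation BwB w := (dcoset pi N B w B).

Let sG := BN_groupH hBN.
Let sB := BN_groupB hBN.
Let sN := BN_groupN hBN.
Local Hint Extern 2 (Ge _) => apply (BN_subB hBN) : core.
Local Hint Extern 2 (Ge _) => apply (BN_subN hBN) : core.

Lemma dist_relP (X Y : chamber B) g f w :
  proj1_sig X = lcoset g B -> proj1_sig Y = lcoset f B ->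
  dist_rel pi N Ge B X Y w <-> Ge (g^-1 * f) /\ BwB w (g^-1 * f).
Proof.
  intros hX hY. split; [|intros []; exists g, f; auto].
  intros (g' & f' & hX' & hY' & hG & hC).
  rewrite hX in hX'. rewrite hY in hY'.
  apply lcoset_eq in hX', hY'; auto.
  replace (g^-1 * f) with ((g^-1 * g') * (g'^-1 * f') * (f^-1 * f')^-1) by (gsimpl; reflexivity).
  split; [auto 10 | apply dcoset_mulr, dcoset_mull; auto].
Qed.

Lemma dist_spec (X Y : chamber B) : match dist pi N Ge B X Y with
  | Some w => dist_rel pi N Ge B X Y w
  | None => ~ exists w, dist_rel pi N Ge B X Y w end.
Proof.
  unfold dist. apply epsilon_spec.
  destruct (classic (exists w, dist_rel pi N Ge B X Y w)) as [[w h]|h].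
  - exists (Some w). exact h.
  - exists None. exact h.
Qed.

Lemma dist_Some (X Y : chamber B) w :
  dist_rel pi N Ge B X Y w -> dist pi N Ge B X Y = Some w.
Proof.
  intro h. pose proof (dist_spec X Y) as hd. destruct (dist pi N Ge B X Y) as [w'|].
  - f_equal. destruct (proj2_sig X) as [g hg], (proj2_sig Y) as [f hf].
    apply (dist_relP X Y g f) in h, hd; auto.
    apply (bruhat_disjoint hBN) with (g^-1 * f); apply hd || apply h.
  - exfalso. eauto.
Qed.

Lemma connectedP (X Y : chamber B) g f :
  proj1_sig X = lcoset g B -> proj1_sig Y = lcoset f B ->
  connected pi N Ge B X Y <-> Ge (g^-1 * f).
Proof.
  intros hX hY. unfold connected. split.
  - pose proof (dist_spec X Y) as hd. destruct (dist pi N Ge B X Y) as [w|]; [|congruence].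
    intros _. apply (dist_relP X Y g f w hX hY) in hd. apply hd.
  - intro h. destruct (bruhat_cover hBN _ h) as [w hw].
    rewrite (dist_Some X Y w); [discriminate|]. apply (dist_relP X Y g f w); auto.
Qed.

Lemma component_connected X0 (X Y : component pi N Ge B X0) g f :
  proj1_sig (proj1_sig X) = lcoset g B -> proj1_sig (proj1_sig Y) = lcoset f B ->
  Ge (g^-1 * f).
Proof.
  intros hX hY. destruct (proj2_sig X0) as [x0 h0].
  pose proof (proj2_sig X) as cX. pose proof (proj2_sig Y) as cY.
  apply (connectedP _ _ x0 g h0 hX) in cX. apply (connectedP _ _ x0 f h0 hY) in cY.
  replace (g^-1 * f) with ((x0^-1 * g)^-1 * (x0^-1 * f)) by (gsimpl; reflexivity). auto.
Qed.

Lemma dist_compP X0 (X Y : component pi N Ge B X0) g f w :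
  proj1_sig (proj1_sig X) = lcoset g B -> proj1_sig (proj1_sig Y) = lcoset f B ->
  dist_comp pi N Ge B X0 X Y = w <-> BwB w (g^-1 * f).
Proof.
  intros hX hY. pose proof (component_connected X0 X Y g f hX hY) as hG.
  destruct (bruhat_cover hBN _ hG) as [w0 hw0].
  unfold dist_comp. rewrite (dist_Some _ _ w0); [|apply (dist_relP _ _ g f w0); auto].
  split; [intros <-; exact hw0 | apply (bruhat_disjoint hBN); exact hw0].
Qed.

Lemma connected_equiv : equivalence (connected pi N Ge B).
Proof.
  split; [|split].
  - intro X. destruct (proj2_sig X) as [g hg].
    apply (connectedP X X g g hg hg). rewrite gmulV. auto.
  - intros X Y h. destruct (proj2_sig X) as [g hg], (proj2_sig Y) as [f hf].
    apply (connectedP X Y g f hg hf) in h. apply (connectedP Y X f g hf hg).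
    replace (f^-1 * g) with ((g^-1 * f)^-1) by (gsimpl; reflexivity). auto.
  - intros X Y Z h1 h2.
    destruct (proj2_sig X) as [g hg], (proj2_sig Y) as [f hf], (proj2_sig Z) as [z hz].
    apply (connectedP X Y g f hg hf) in h1. apply (connectedP Y Z f z hf hz) in h2.
    apply (connectedP X Z g z hg hz).
    replace (g^-1 * z) with ((g^-1 * f) * (f^-1 * z)) by (gsimpl; reflexivity). auto.
Qed.

Lemma dist_comp_extend X0 (X Y : component pi N Ge B X0) s : SS s ->
  exists X', dist_comp pi N Ge B X0 X' X = s /\
    dist_comp pi N Ge B X0 X' Y = s * dist_comp pi N Ge B X0 X Y.
Proof.
  intro hs. destruct (proj2_sig (proj1_sig X)) as [g hg], (proj2_sig (proj1_sig Y)) as [f hf].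
  pose proof (proj1 (dist_compP X0 X Y g f _ hg hf) eq_refl) as hw.
  set (w := dist_comp pi N Ge B X0 X Y) in *.
  destruct hw as (n & a & c & hn & e & ha & hc & E).
  destruct (BN_surj hBN s) as [m [hm <-]].
  (* the new chamber is g a m B, adjacent to gB = g a B *)
  assert (hX' : connected pi N Ge B X0 (cham B (g * a * m))).
  { destruct (proj2_sig X0) as [x0 h0]. pose proof (proj2_sig X) as cX.
    apply (connectedP _ _ x0 g h0 hg) in cX.
    apply (connectedP X0 (cham B (g * a * m)) x0 (g * a * m) h0 eq_refl).
    replace (x0^-1 * (g * a * m)) with ((x0^-1 * g) * a * m) by (gsimpl; reflexivity). auto. }
  assert (hms : pi (m^-1) = pi m) by (rewrite (piV hBN), (invS SS (BN_Sinv hBN)); auto).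
  exists (exist _ _ hX'). split.
  - apply (dist_compP X0 (exist _ _ hX') X (g * a * m) g _ eq_refl hg).
    exists (m^-1), 1, (a^-1). repeat split; auto. gsimpl. reflexivity.
  - apply (dist_compP X0 (exist _ _ hX') Y (g * a * m) f _ eq_refl hf).
    exists (m^-1 * n), 1, c. repeat split; auto.
    + rewrite (BN_morph hBN), hms, e; auto.
    + replace f with (g * (g^-1 * f)) by (gsimpl; reflexivity). rewrite E. gsimpl. reflexivity.
Qed.

Lemma component_building X0 : building SS (component pi N Ge B X0) (dist_comp pi N Ge B X0).
Proof.
  split; [|split; [|exact (dist_comp_extend X0)]].
  - intros X Y. destruct (proj2_sig (proj1_sig X)) as [g hg], (proj2_sig (proj1_sig Y)) as [f hf].
    rewrite (dist_compP X0 X Y g f 1 hg hf), (BwB1 hBN). split.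
    + intro h. apply sig_eq, sig_eq. rewrite hg, hf. apply lcoset_eq; auto.
    + intros ->. rewrite hf in hg. apply (lcoset_eq B g f); auto.
  - intros X Y X' w s e1 e2 hs.
    destruct (proj2_sig (proj1_sig X)) as [g hg], (proj2_sig (proj1_sig Y)) as [f hf],
      (proj2_sig (proj1_sig X')) as [x hx].
    apply (dist_compP X0 X Y g f w hg hf) in e1. apply (dist_compP X0 X' X x g s hx hg) in e2.
    rewrite !(dist_compP X0 X' Y x f _ hx hf).
    replace (x^-1 * f) with ((x^-1 * g) * (g^-1 * f)) by (gsimpl; reflexivity).
    split.
    + apply (BsB_mul hBN); auto.
    + intro hl. apply (len_succP SS (BN_Sinv hBN) (BN_Sgen hBN)) in hl.
      apply (BsB_mul_reduced hBN); auto.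
Qed.

Lemma part1_of_BNpair : part1 pi N SS Ge B.
Proof. split; [exact connected_equiv | exact component_building]. Qed.

Lemma part3_of_BNpair : part3 pi N Ge B.
Proof.
  split; [|intros f f'; exact (connectedP (cham B f) (cham B f') f f' eq_refl eq_refl)].
  intros f X. destruct (proj2_sig X) as [x hx].
  rewrite (connectedP (cham B f) X f x eq_refl hx). split.
  - intro h. exists (f^-1 * x). split; [exact h|]. rewrite hx. gsimpl. reflexivity.
  - intros [h [hh e]]. rewrite hx in e. apply lcoset_eq in e; auto.
    replace (f^-1 * x) with (h * ((x^-1 * (f * h))^-1)) by (gsimpl; reflexivity). auto.
Qed.

End Chambers.

Section Codistance.
Context {G W : Group} {pi : G -> W} {N Bo Be : G -> Prop}
  (sBo : subgroup Bo) (sBe : subgroup Be)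
  (bruhat : forall g, exists w, dcoset pi N Bo w Be g /\
     forall w', dcoset pi N Bo w' Be g -> w' = w).

Lemma codist_relP (X : chamber Bo) (Y : chamber Be) g f w :
  proj1_sig X = lcoset g Bo -> proj1_sig Y = lcoset f Be ->
  codist_rel pi N Bo Be X Y w <-> dcoset pi N Bo w Be (g^-1 * f).
Proof.
  intros hX hY. split; [|exists g, f; auto].
  intros (g' & f' & hX' & hY' & hC).
  rewrite hX in hX'. rewrite hY in hY'. apply lcoset_eq in hX', hY'; auto.
  replace (g^-1 * f) with ((g^-1 * g') * (g'^-1 * f') * (f^-1 * f')^-1) by (gsimpl; reflexivity).
  apply dcoset_mulr, dcoset_mull; auto.
Qed.

Lemma codistP (X : chamber Bo) (Y : chamber Be) g f w :
  proj1_sig X = lcoset g Bo -> proj1_sig Y = lcoset f Be ->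
  codist pi N Bo Be X Y = w <-> dcoset pi N Bo w Be (g^-1 * f).
Proof.
  intros hX hY. destruct (bruhat (g^-1 * f)) as [w0 [h0 u]].
  assert (hc : codist_rel pi N Bo Be X Y (codist pi N Bo Be X Y)).
  { unfold codist. apply epsilon_spec. exists w0. apply (codist_relP X Y g f w0 hX hY), h0. }
  apply (codist_relP X Y g f _ hX hY), u in hc.
  rewrite hc. split; [intros <-; exact h0 | intro h; symmetry; apply u, h].
Qed.

End Codistance.

Lemma codist_inv {G W : Group} {SS : W -> Prop} {pi : G -> W} {N H B Bo Be : G -> Prop}
  (hBN : BNpair SS pi N H B) (sBo : subgroup Bo) (sBe : subgroup Be)
  (bruhat_oe : forall g, exists w, dcoset pi N Bo w Be g /\
     forall w', dcoset pi N Bo w' Be g -> w' = w)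
  (bruhat_eo : forall g, exists w, dcoset pi N Be w Bo g /\
     forall w', dcoset pi N Be w' Bo g -> w' = w)
  (X : chamber Bo) (Y : chamber Be) :
  codist pi N Bo Be X Y = (codist pi N Be Bo Y X)^-1.
Proof.
  destruct (proj2_sig X) as [g hg], (proj2_sig Y) as [f hf].
  apply (codistP sBo sBe bruhat_oe X Y g f _ hg hf).
  pose proof (proj1 (codistP sBe sBo bruhat_eo Y X f g _ hf hg) eq_refl) as h.
  apply (dcoset_inv hBN) in h; auto. rewrite invMg, invgK in h. exact h.
Qed.

Lemma codist_extend {G W : Group} {SS : W -> Prop} {pi : G -> W} {N Ge Bo Be : G -> Prop}
  (hBe : BNpair SS pi N Ge Be) (sBo : subgroup Bo)
  (bruhat : forall g, exists w, dcoset pi N Bo w Be g /\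
     forall w', dcoset pi N Bo w' Be g -> w' = w)
  Y0 (X : chamber Bo) (Y : component pi N Ge Be Y0) s : SS s ->
  exists Z : component pi N Ge Be Y0, dist_comp pi N Ge Be Y0 Y Z = s /\
    codist pi N Bo Be X (proj1_sig Z) = codist pi N Bo Be X (proj1_sig Y) * s.
Proof.
  pose proof (BN_groupB hBe) as sBe. pose proof (BN_groupN hBe) as sN.
  pose proof (BN_groupH hBe) as sGe. pose proof (BN_subB hBe) as BGe.
  pose proof (BN_subN hBe) as NGe.
  intro hs. destruct (proj2_sig X) as [g hg], (proj2_sig (proj1_sig Y)) as [f hf].
  pose proof (proj1 (codistP sBo sBe bruhat X _ g f _ hg hf) eq_refl) as hw.
  set (w := codist pi N Bo Be X (proj1_sig Y)) in *.
  destruct hw as (n & a & c & hn & en & ha & hc & E).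
  destruct (BN_surj hBe s) as [m [hm <-]].
  (* the new chamber is f c^-1 m B^e, adjacent to fB^e = f c^-1 B^e *)
  assert (hZ : connected pi N Ge Be Y0 (cham Be (f * c^-1 * m))).
  { destruct (proj2_sig Y0) as [y0 h0]. pose proof (proj2_sig Y) as cY.
    apply (connectedP hBe _ _ y0 f h0 hf) in cY.
    apply (connectedP hBe Y0 (cham Be (f * c^-1 * m)) y0 (f * c^-1 * m) h0 eq_refl).
    replace (y0^-1 * (f * c^-1 * m)) with ((y0^-1 * f) * c^-1 * m) by (gsimpl; reflexivity).
    auto. }
  exists (exist _ _ hZ). split.
  - apply (dist_compP hBe Y0 Y (exist _ _ hZ : component pi N Ge Be Y0) f (f * c^-1 * m) _
      hf eq_refl).
    exists m, (c^-1), 1. repeat split; auto. gsimpl. reflexivity.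
  - apply (codistP sBo sBe bruhat X (cham Be (f * c^-1 * m)) g _ _ hg eq_refl).
    exists (n * m), a, 1. repeat split; auto.
    + rewrite (BN_morph hBe), en; auto.
    + replace (g^-1 * (f * c^-1 * m)) with ((g^-1 * f) * c^-1 * m) by (gsimpl; reflexivity).
      rewrite E. gsimpl. reflexivity.
Qed.

Section TwinExchange.
Context {G W : Group} {SS : W -> Prop} {pi : G -> W}
  {N Go Bo Ge Be H Bo' Be' : G -> Prop}
  (hBo : BNpair SS pi N Go Bo) (hBe : BNpair SS pi N Ge Be) (hH : BNpair SS pi N H Be')
  (HH : forall g, H g <-> Go g /\ Ge g) (HBo' : forall g, Bo' g <-> Bo g /\ Ge g)
  (HBe' : forall g, Be' g <-> Be g /\ Go g)
  (tbn : forall s w, SS s -> len_succ SS (s * w) w -> forall g,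
     dcoset3 pi N Be' s Be' w Bo' g <-> dcoset pi N Be' (s * w) Bo' g)
  (bruhat : forall g, exists w, dcoset pi N Bo w Be g /\
     forall w', dcoset pi N Bo w' Be g -> w' = w).

Let sBo := BN_groupB hBo.
Let sBe := BN_groupB hBe.
Let sBe' := BN_groupB hH.
Let sN := BN_groupN hBe.
Let sGo := BN_groupH hBo.
Let sGe := BN_groupH hBe.
Let Sinv := BN_Sinv hBe.
Let Sgen := BN_Sgen hBe.

Lemma groupBo' : subgroup Bo'.
Proof.
  split; [|split].
  - apply HBo'. auto.
  - intros x y [hx hx']%HBo' [hy hy']%HBo'. apply HBo'. auto.
  - intros x [hx hx']%HBo'. apply HBo'. auto.
Qed.

(* (TBN1) for B^e', transported to B^o' w B^e' s B^e' by inversion. *)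
Lemma twin_exchange_reduced s w n b m : SS s -> len_succ SS (w * s) w ->
  N n -> pi n = w -> Be' b -> N m -> pi m = s -> dcoset pi N Bo' (w * s) Be' (n * b * m).
Proof.
  intros hs hl hn <- hb hm <-.
  pose proof groupBo' as sBo'.
  assert (hl' : len_succ SS (pi m * (pi n)^-1) ((pi n)^-1)).
  { apply (len_succP SS Sinv Sgen). apply (len_succP SS Sinv Sgen) in hl.
    rewrite <- (invS SS Sinv _ hs), <- invMg, !(len_inv SS Sinv Sgen). exact hl. }
  assert (h : dcoset3 pi N Be' (pi m) Be' ((pi n)^-1) Bo' ((n * b * m)^-1)).
  { exists (m^-1), (n^-1), 1, (b^-1), 1. repeat split; auto.
    - rewrite (piV hH), (invS SS Sinv); auto.
    - rewrite (piV hH); auto.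
    - gsimpl. reflexivity. }
  apply (tbn _ _ hs hl'), (dcoset_inv hH) in h; auto.
  rewrite invgK, invMg, invgK, (invS SS Sinv _ hs) in h. exact h.
Qed.

Lemma twin_exchange s w n b m : SS s -> len_succ SS (w * s) w ->
  N n -> pi n = w -> Be b -> N m -> pi m = s -> dcoset pi N Bo (w * s) Be (n * b * m).
Proof.
  intros hs hl hn en hb hm em.
  assert (NGo : forall x, N x -> Go x) by apply (BN_subN hBo).
  assert (NGe : forall x, N x -> Ge x) by apply (BN_subN hBe).
  assert (BeGe : forall x, Be x -> Ge x) by apply (BN_subB hBe).
  assert (BoGo : forall x, Bo x -> Go x) by apply (BN_subB hBo).
  destruct (bruhat (n * b * m)) as [v [(k & p & q & hk & ek & hp & hq & E) uv]].
  (* p k = n b m q^-1 lies in G^e, hence p lies in B^o' *)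
  assert (hp' : Bo' p).
  { apply HBo'. split; [exact hp|].
    replace p with (n * b * m * q^-1 * k^-1) by (rewrite E; gsimpl; reflexivity). auto 10. }
  (* n^-1 p k = b m q^-1 lies in H and in B^e s B^e, hence in B^e' s B^e' *)
  assert (eh : n^-1 * p * k = b * m * q^-1).
  { replace (b * m) with (n^-1 * (n * b * m)) by (gsimpl; reflexivity).
    rewrite E. gsimpl. reflexivity. }
  assert (hH' : H (n^-1 * p * k)) by (apply HH; split; [|rewrite eh]; auto).
  destruct (bruhat_cover hH _ hH') as [u hu].
  assert (u = s).
  { apply (bruhat_disjoint hBe) with (n^-1 * p * k).
    - apply dcoset_sub with Be' Be'; auto; intros x hx; apply HBe', hx.
    - rewrite eh, <- em. apply dcoset_mulr, dcoset_mull, (BwB_N hBe); auto. }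
  subst u. destruct hu as (m' & b' & q' & hm' & em' & hb' & hq' & eh').
  assert (hx : dcoset pi N Bo' (w * s) Be' (n * b' * m'))
    by (apply twin_exchange_reduced; auto).
  assert (ex : n * b' * m' = p * k * q'^-1).
  { replace (n * b' * m') with (n * (b' * m' * q') * q'^-1) by (gsimpl; reflexivity).
    rewrite <- eh'. gsimpl. reflexivity. }
  rewrite ex in hx.
  assert (hx' : dcoset pi N Bo (w * s) Be (p * k * q'^-1)).
  { apply dcoset_sub with Bo' Be'; [intros x []%HBo' | intros x []%HBe' | ]; auto. }
  assert (hv : dcoset pi N Bo v Be (p * k * q'^-1)).
  { apply HBe' in hq' as [hq'e _]. exists k, p, (q'^-1). repeat split; auto. }
  destruct (bruhat (p * k * q'^-1)) as [v0 [_ uv0]].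
  rewrite E. exists k, p, q. repeat split; auto.
  rewrite ek, (uv0 _ hv), (uv0 _ hx'). reflexivity.
Qed.

Lemma dcoset_mul_reduced w s x y : SS s -> len_succ SS (w * s) w ->
  dcoset pi N Bo w Be x -> dcoset pi N Be s Be y -> dcoset pi N Bo (w * s) Be (x * y).
Proof.
  intros hs hl (n & a & c & hn & en & ha & hc & ->) (m & d & e & hm & em & hd & he & ->).
  replace (a * n * c * (d * m * e)) with (a * (n * (c * d) * m) * e) by (gsimpl; reflexivity).
  apply dcoset_mulr, dcoset_mull, twin_exchange; auto.
Qed.

Lemma codist_step Y0 (X : chamber Bo) (Y Z : component pi N Ge Be Y0) w s :
  codist pi N Bo Be X (proj1_sig Y) = w -> dist_comp pi N Ge Be Y0 Y Z = s -> SS s ->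
  len_succ SS (w * s) w -> codist pi N Bo Be X (proj1_sig Z) = w * s.
Proof.
  intros e1 e2 hs hl.
  destruct (proj2_sig X) as [g hg], (proj2_sig (proj1_sig Y)) as [f hf],
    (proj2_sig (proj1_sig Z)) as [z hz].
  apply (codistP sBo sBe bruhat X _ g f w hg hf) in e1.
  apply (dist_compP hBe Y0 Y Z f z s hf hz) in e2.
  apply (codistP sBo sBe bruhat X _ g z _ hg hz).
  replace (g^-1 * z) with ((g^-1 * f) * (f^-1 * z)) by (gsimpl; reflexivity).
  apply dcoset_mul_reduced; assumption.
Qed.
End TwinExchange.

Lemma twin_building_of_geometric {G W : Group} {S : W -> Prop} {pi : G -> W}
  {N Gp Gm Bp Bm : G -> Prop} (Htwin : geometric_twinBN S pi N Gp Gm Bp Bm)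
  (X0 : chamber Bp) (Y0 : chamber Bm) :
  twin_building S (component pi N Gp Bp X0) (component pi N Gm Bm Y0)
    (dist_comp pi N Gp Bp X0) (dist_comp pi N Gm Bm Y0)
    (codist_comp pi N Gp Bp Gm Bm X0 Y0)
    (fun Y X => codist pi N Bm Bp (proj1_sig Y) (proj1_sig X)).
Proof.
  destruct Htwin as (_ & _ & _ & hBp & hBm & (hHp & hHm & _ & tbn_p & tbn_m & _) & brp & brm).
  pose proof (BN_groupB hBp) as sBp. pose proof (BN_groupB hBm) as sBm.
  assert (setI_iff : forall (A C : G -> Prop) g, setI A C g <-> A g /\ C g) by reflexivity.
  assert (setI_iffC : forall (A C : G -> Prop) g, setI A C g <-> C g /\ A g)
    by (unfold setI; tauto).
  unfold codist_comp.
  split; [exact (component_building hBp X0)|].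
  split; [exact (component_building hBm Y0)|].
  split; [|split; [|split; [|split; [|split]]]].
  - intros X Y. apply (codist_inv hBp); assumption.
  - intros Y X. apply (codist_inv hBp); assumption.
  - intros X.
    exact (codist_step hBp hBm hHm (setI_iff _ _) (setI_iff _ _) (setI_iff _ _) tbn_m brp Y0 (proj1_sig X)).
  - intros X.
    exact (codist_step hBm hBp hHp (setI_iffC _ _) (setI_iff _ _) (setI_iff _ _) tbn_p brm X0 (proj1_sig X)).
  - intros X; apply (codist_extend hBm sBp brp).
  - intros X; apply (codist_extend hBp sBm brm).
Qed.

Theorem mainTheorem4 (G W : Group) (S : W -> Prop) (pi : G -> W)
  (N Gp Gm Bp Bm : G -> Prop)
  (Htwin : geometric_twinBN S pi N Gp Gm Bp Bm) :
  (* (1) *)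
  part1 pi N S Gp Bp /\ part1 pi N S Gm Bm /\
  (* (2) *)
  (forall (X0 : chamber Bp) (Y0 : chamber Bm),
     twin_building S (component pi N Gp Bp X0) (component pi N Gm Bm Y0)
       (dist_comp pi N Gp Bp X0) (dist_comp pi N Gm Bm Y0)
       (codist_comp pi N Gp Bp Gm Bm X0 Y0)
       (fun Y X => codist pi N Bm Bp (proj1_sig Y) (proj1_sig X))) /\
  (* (3) *)
  part3 pi N Gp Bp /\ part3 pi N Gm Bm.
Proof.
  pose proof Htwin as (_ & _ & _ & hBp & hBm & _).
  split; [exact (part1_of_BNpair hBp)|].
  split; [exact (part1_of_BNpair hBm)|].
  split; [exact (twin_building_of_geometric Htwin)|].
  split; [exact (part3_of_BNpair hBp) | exact (part3_of_BNpair hBm)].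
Qed.
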